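(* Let $m,n,M$ be positive integers, let $c(0)>0$ be real, and define $c(k)=c(k-1)/2^{\frac{m+n}{m}}$ for $k\ge1$, $\hat c(0)=\lceil 2^Mc(0)\rceil/2^M$ and $\hat c(k)=\lceil 2^M\hat c(k-1)2^{-\frac{m+n}{m}}\rceil/2^M$ for $k\ge1$. Then for each integer $k\ge0$, $$c(k)\le\hat c(k)<c(k)+\frac1{2^M}\sum_{i=0}^k2^{-\frac{i(m+n)}{m}}<c(k)+\frac2{2^M}.$$ *)

From Stdlib Require Import Reals Lra Lia.
Open Scope R_scope.

Definition rho (m n : nat) : R := Rpower 2 (INR (m + n) / INR m).

Fixpoint c_seq (m n : nat) (c0 : R) (k : nat) : R :=
  match k with
  | O => c0
  | S k' => c_seq m n c0 k' / rho m n
  end.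

Fixpoint chat_seq (m n M : nat) (c0 : R) (k : nat) : R :=
  match k with
  | O => IZR (Zceil (2 ^ M * c0)) / 2 ^ M
  | S k' => IZR (Zceil (2 ^ M * chat_seq m n M c0 k' * Rpower 2 (- (INR (m + n) / INR m)))) / 2 ^ M
  end.

From Stdlib Require Import Reals Lra.
Open Scope R_scope.

(* Write a = 2^{-(m+n)/m} <= 1/2.  Exact and rounded sequences are both
   multiplied by a at each step; rounding up to the grid (1/P)Z adds an error
   in [0, 1/P), and the error inherited from step k is damped by a.  Hence the
   total error after k steps is below (1/P)(1 + a + ... + a^k) < 2/P. *)

Lemma Zceil_div_bounds (P y : R) :
  0 < P -> y <= IZR (Zceil (P * y)) / P < y + / P.
Proof.
  intros HP; destruct (Zceil_bound (P * y)) as [Hlo Hhi].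
  split.
  - apply (Rmult_le_reg_r P); [exact HP|].
    unfold Rdiv; rewrite Rmult_assoc, Rinv_l by lra; lra.
  - apply (Rmult_lt_reg_r P); [exact HP|].
    unfold Rdiv; rewrite Rmult_assoc, Rinv_l, Rmult_plus_distr_r, Rinv_l by lra.
    lra.
Qed.

Lemma geometric_sum_succ_l (a : R) (k : nat) :
  sum_f_R0 (fun i => a ^ i) (S k) = 1 + a * sum_f_R0 (fun i => a ^ i) k.
Proof.
  induction k as [|k IH].
  - simpl; ring.
  - rewrite tech5, IH at 1; rewrite tech5; simpl; ring.
Qed.

Lemma geometric_sum_lt_2 (a : R) (k : nat) :
  0 <= a <= / 2 -> sum_f_R0 (fun i => a ^ i) k < 2.
Proof.
  intros Ha; induction k as [|k IH].
  - simpl; lra.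
  - rewrite geometric_sum_succ_l.
    assert (0 <= sum_f_R0 (fun i => a ^ i) k).
    { apply cond_pos_sum; intro i; apply pow_le; lra. }
    nra.
Qed.

Section RoundedGeometric.

Variables (a P : R) (c chat : nat -> R).
Hypotheses (a_ge0 : 0 <= a) (P_gt0 : 0 < P).
Hypothesis c_succ : forall k, c (S k) = c k * a.
Hypothesis chat0 : chat O = IZR (Zceil (P * c O)) / P.
Hypothesis chat_succ : forall k, chat (S k) = IZR (Zceil (P * (chat k * a))) / P.

Lemma rounded_geometric_bounds (k : nat) :
  c k <= chat k < c k + / P * sum_f_R0 (fun i => a ^ i) k.
Proof.
  induction k as [|k [IHlo IHhi]].
  - rewrite chat0; simpl.
    destruct (Zceil_div_bounds P (c O) P_gt0); lra.
  - rewrite chat_succ, c_succ, geometric_sum_succ_l.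
    destruct (Zceil_div_bounds P (chat k * a) P_gt0) as [Hlo Hhi].
    split; nra.
Qed.

End RoundedGeometric.

Lemma Rpower_opp_mult_pow (x : R) (i : nat) :
  Rpower 2 (- (INR i * x)) = Rpower 2 (- x) ^ i.
Proof.
  rewrite <- Rpower_pow by (unfold Rpower; apply exp_pos).
  rewrite Rpower_mult; f_equal; ring.
Qed.

Lemma Rpower2_opp_le_half (x : R) : 1 <= x -> Rpower 2 (- x) <= / 2.
Proof.
  intros Hx.
  rewrite <- (Rpower_1 2) at 2 by lra; rewrite <- Rpower_Ropp.
  apply Rle_Rpower; lra.
Qed.

Lemma ratio_exponent_ge1 (m n : nat) : (0 < m)%nat -> 1 <= INR (m + n) / INR m.
Proof.
  intros Hm.
  assert (0 < INR m) by (apply lt_0_INR; exact Hm).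
  assert (0 <= INR n) by apply pos_INR.
  apply (Rmult_le_reg_r (INR m)); [assumption|].
  unfold Rdiv; rewrite Rmult_assoc, Rinv_l, plus_INR by lra; lra.
Qed.

Theorem lemma5 (m n M : nat) (c0 : R) (k : nat) :
  (0 < m)%nat -> (0 < n)%nat -> (0 < M)%nat -> 0 < c0 ->
  c_seq m n c0 k <= chat_seq m n M c0 k /\
  chat_seq m n M c0 k <
    c_seq m n c0 k + / 2 ^ M * sum_f_R0 (fun i => Rpower 2 (- (INR i * INR (m + n) / INR m))) k /\
  c_seq m n c0 k + / 2 ^ M * sum_f_R0 (fun i => Rpower 2 (- (INR i * INR (m + n) / INR m))) k <
    c_seq m n c0 k + 2 / 2 ^ M.
Proof.
  intros Hm _ _ _.
  set (q := INR (m + n) / INR m).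
  set (a := Rpower 2 (- q)).
  assert (Ha : 0 <= a <= / 2).
  { split; [left; apply exp_pos|apply Rpower2_opp_le_half, ratio_exponent_ge1, Hm]. }
  assert (HP : 0 < 2 ^ M) by (apply pow_lt; lra).
  assert (Hsum : sum_f_R0 (fun i => Rpower 2 (- (INR i * INR (m + n) / INR m))) k
                 = sum_f_R0 (fun i => a ^ i) k).
  { apply sum_eq; intros i _; unfold a; rewrite <- Rpower_opp_mult_pow.
    unfold q, Rdiv; f_equal; ring. }
  rewrite Hsum.
  destruct (rounded_geometric_bounds a (2 ^ M) (c_seq m n c0) (chat_seq m n M c0)
              (proj1 Ha) HP) with (k := k) as [Hlo Hhi].
  - intro j; simpl; unfold Rdiv, rho, a; rewrite Rpower_Ropp; reflexivity.
  - reflexivity.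
  - intro j; simpl; rewrite Rmult_assoc; reflexivity.
  - assert (0 < / 2 ^ M) by (apply Rinv_0_lt_compat, HP).
    pose proof (geometric_sum_lt_2 a k Ha).
    unfold Rdiv; repeat split; [exact Hlo | exact Hhi | nra].
Qed.
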